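(* With the notation of the context, assume that $L$ is nonresonant in $X_{N,T}$, $X_{D,T}$, $X_{M_1,T}$ and $X_{M_2,T}$, that $\widetilde L$ is nonresonant in $X_{N,2T}$ and $X_{D,2T}$, and that $\widetilde{\widetilde L}$ is nonresonant in $X_{P,4T}$. Then for all $(t,s)\in I\times I$, \[G_P[4T](t,s)=\tfrac14\big(G_N[T](t,s)+G_D[T](t,s)+G_{M_1}[T](t,s)+G_{M_2}[T](t,s)\big).\]
   Context: Fix $n\ge 1$, $T>0$, $I=[0,T]$, $J=[0,2T]$. $W^{2n,1}(K)$: $u\in C^{2n-1}(K)$ with $u^{(2n-1)}$ absolutely continuous. Let $a_0,\dots,a_{2n-1}\in L^{\alpha}(I)$, $\alpha\ge1$, $Lu=u^{(2n)}+\sum_{k=0}^{2n-1}a_ku^{(k)}$ on $I$. $\widetilde L u=u^{(2n)}+\sum_{k=0}^{n-1}(\hat a_{2k+1}u^{(2k+1)}+\tilde a_{2k}u^{(2k)})$ on $J$, where $\tilde a_{2k}=a_{2k}$, $\hat a_{2k+1}=a_{2k+1}$ on $I$, and $\tilde a_{2k}(t)=a_{2k}(2T-t)$, $\hat a_{2k+1}(t)=-a_{2k+1}(2T-t)$ for $t\in(T,2T]$; $\widetilde{\widetilde L}$ on $[0,4T]$ is obtained by the same construction from $\widetilde L$ (reflection about $2T$). Nonresonance of $M$ in $X$: $Mu=0$ a.e., $u\in X$ implies $u\equiv0$; the Green's function $G$ then gives the unique solution $u(t)=\int G(t,s)\sigma(s)ds$ of $Mu=\sigma$, $u\in X$. Spaces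 ($k=0,\dots,n-1$ unless stated): $X_{N,T}$: $u^{(2k+1)}(0)=u^{(2k+1)}(T)=0$; $X_{D,T}$: $u^{(2k)}(0)=u^{(2k)}(T)=0$; $X_{M_1,T}$: $u^{(2k+1)}(0)=u^{(2k)}(T)=0$; $X_{M_2,T}$: $u^{(2k)}(0)=u^{(2k+1)}(T)=0$ (all in $W^{2n,1}(I)$); $X_{N,2T}$, $X_{D,2T}$: the analogous Neumann/Dirichlet conditions at $0$ and $2T$ in $W^{2n,1}(J)$; $X_{P,4T}=\{u\in W^{2n,1}([0,4T]): u^{(k)}(0)=u^{(k)}(4T),\ k=0,\dots,2n-1\}$. $G_N[T],G_D[T],G_{M_1}[T],G_{M_2}[T]$ are the Green's functions of $L$ on $X_{N,T},X_{D,T},X_{M_1,T},X_{M_2,T}$, and $G_P[4T]$ that of $\widetilde{\widetilde L}$ on $X_{P,4T}$. *)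

From HB Require Import structures.
From mathcomp Require Import all_boot all_order all_algebra.
From mathcomp Require Import all_classical all_reals all_analysis.
Set Implicit Arguments. Unset Strict Implicit. Unset Printing Implicit Defensive.
Import Order.TTheory GRing.Theory Num.Theory.
Import numFieldNormedType.Exports.
Local Open Scope classical_set_scope.
Local Open Scope ring_scope.

Section Defs.
Variable R : realType.

Definition Icc (a b : R) : set R := [set x | a <= x <= b].

(** [f] has derivative [l] at [t] relative to the set [K]
    (one-sided at the endpoints of an interval). *)
Definition has_deriv_within (K : set R) (f : R -> R) (t l : R) : Prop :=
  (fun h : R => h^-1 * (f (t + h) - f t)) @
     within [set h | h != 0 /\ K (t + h)] (nbhs (0 : R)) --> l.

Definition deriv_chain (K : set R) (m : nat) (u : R -> R)
    (d : nat -> R -> R) : Prop :=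
  (forall t, K t -> d 0%N t = u t) /\
  forall k, (k < m)%N -> forall t, K t -> has_deriv_within K (d k) t (d k.+1 t).

Definition abs_cont (a b : R) (f : R -> R) : Prop :=
  forall e : R, 0 < e -> exists2 del : R, 0 < del &
    forall (N : nat) (x y : 'I_N -> R),
      (forall i, a <= x i /\ x i <= y i /\ y i <= b) ->
      (forall i j, i != j -> y i <= x j \/ y j <= x i) ->
      \sum_(i < N) (y i - x i) < del ->
      \sum_(i < N) `|f (y i) - f (x i)| < e.

(** u ∈ W^{2n,1}([a,b]) with derivatives d 0 = u, ..., d (2n-1):
    u ∈ C^{2n-1}([a,b]) and u^(2n-1) absolutely continuous. *)
Definition W2n1 (a b : R) (n : nat) (u : R -> R) (d : nat -> R -> R) : Prop :=
  deriv_chain (Icc a b) (n.*2).-1 u d /\ {within Icc a b, continuous (d (n.*2).-1)}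
  /\ abs_cont a b (d (n.*2).-1).

Definition solves (a b : R) (n : nat) (c : nat -> R -> R) (d : nat -> R -> R)
    (sigma : R -> R) : Prop :=
  {ae (@lebesgue_measure R), forall t, Icc a b t ->
     exists v : R, is_derive t 1 (d (n.*2).-1) v /\
       v + \sum_(k < n.*2) c k t * d k t = sigma t}.

Definition BC_N (a b : R) (n : nat) (d : nat -> R -> R) : Prop :=
  forall k, (k < n)%N -> d k.*2.+1 a = 0 /\ d k.*2.+1 b = 0.
Definition BC_D (a b : R) (n : nat) (d : nat -> R -> R) : Prop :=
  forall k, (k < n)%N -> d k.*2 a = 0 /\ d k.*2 b = 0.
Definition BC_M1 (a b : R) (n : nat) (d : nat -> R -> R) : Prop :=
  forall k, (k < n)%N -> d k.*2.+1 a = 0 /\ d k.*2 b = 0.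
Definition BC_M2 (a b : R) (n : nat) (d : nat -> R -> R) : Prop :=
  forall k, (k < n)%N -> d k.*2 a = 0 /\ d k.*2.+1 b = 0.
Definition BC_P (a b : R) (n : nat) (d : nat -> R -> R) : Prop :=
  forall k, (k < n.*2)%N -> d k a = d k b.

Definition nonresonant (a b : R) (n : nat) (c : nat -> R -> R)
    (BC : R -> R -> nat -> (nat -> R -> R) -> Prop) : Prop :=
  forall (u : R -> R) (d : nat -> R -> R),
    W2n1 a b n u d -> BC a b n d -> solves a b n c d (fun _ => 0) ->
    forall t, Icc a b t -> u t = 0.

Definition is_green (a b : R) (n : nat) (c : nat -> R -> R)
    (BC : R -> R -> nat -> (nat -> R -> R) -> Prop) (G : R -> R -> R) : Prop :=
  {within [set p : R * R | Icc a b p.1 /\ Icc a b p.2],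
     continuous (fun p : R * R => G p.1 p.2)} /\
  forall sigma : R -> R,
    (@lebesgue_measure R).-integrable (Icc a b) (EFin \o sigma) ->
    exists d : nat -> R -> R,
      W2n1 a b n (fun t => \int[@lebesgue_measure R]_(s in Icc a b) (G t s * sigma s)) d
      /\ BC a b n d /\ solves a b n c d sigma.

Definition Lalpha (a b alpha : R) (f : R -> R) : Prop :=
  measurable_fun (Icc a b) f /\
  (\int[@lebesgue_measure R]_(x in Icc a b) ((`|f x| `^ alpha)%:E) < +oo)%E.

(** Reflection of the coefficients about T (construction of \tilde L):
    c~_k(t) = c_k(t) for t <= T, (-1)^k c_k(2T - t) for t > T. *)
Definition refl (T : R) (c : nat -> R -> R) : nat -> R -> R :=
  fun k t => if t <= T then c k t else (-1) ^+ k * c k (2 * T - t).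

End Defs.

From HB Require Import structures.
From mathcomp Require Import all_boot all_order all_algebra.
From mathcomp Require Import all_classical all_reals all_analysis.
From mathcomp Require Import ring lra.
Import Order.TTheory GRing.Theory Num.Theory.
Import numFieldNormedType.Exports.
Local Open Scope classical_set_scope.
Local Open Scope ring_scope.

(* For sigma in L^1(0, T) let u_N, u_D, u_M1, u_M2 solve L u = sigma in the four
   spaces on [0, T].  The signed means (u_N +- u_D +- u_M1 +- u_M2) / 4 with sign
   patterns (+,+,+,+), (+,-,-,+), (+,+,-,-), (+,-,+,-) solve L u = sigma, resp.
   L u = 0.  Placed on [0, T], reflected onto [T, 2T], translated onto [2T, 3T]
   and reflected onto [3T, 4T], they glue -- this is exactly what the boundary
   conditions provide -- into a 4T-periodic W^{2n,1} solution of the doubly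
   reflected equation with right-hand side sigma 1_[0,T].  By nonresonance it is
   the periodic solution, so
     int_0^T (G_P(t,s) - (G_N + G_D + G_M1 + G_M2)(t,s) / 4) sigma(s) ds = 0
   for every sigma; taking for sigma the (continuous) bracket itself shows that
   it vanishes. *)

Section derivative_within.
Context {R : realType}.
Implicit Types (K : set R) (f g : R -> R) (t l c : R).

Lemma has_deriv_withinP K f t l : has_deriv_within K f t l <->
  (forall e : R, 0 < e -> exists2 del : R, 0 < del & forall h, h != 0 -> K (t + h) ->
     `|h| < del -> `|h^-1 * (f (t + h) - f t) - l| < e).
Proof.
rewrite /has_deriv_within cvgrPdistC_lt; split => H e e0.
  have := H e e0; rewrite near_withinE => /nbhs_normP [d d0 Hd].
  by exists d => // h h0 Kh hd; apply: (Hd h) => //=; rewrite /ball_ /= sub0r normrN.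
have [d d0 Hd] := H e e0; rewrite near_withinE; apply/nbhs_normP; exists d => //= h.
by rewrite /ball_ /= sub0r normrN => hd [h0 Kh]; exact: Hd.
Qed.

Lemma has_deriv_within_setU K1 K2 f t l : has_deriv_within K1 f t l ->
  has_deriv_within K2 f t l -> has_deriv_within (K1 `|` K2) f t l.
Proof.
move=> /has_deriv_withinP H1 /has_deriv_withinP H2; apply/has_deriv_withinP => e e0.
have [d1 d10 Hd1] := H1 e e0; have [d2 d20 Hd2] := H2 e e0.
exists (Num.min d1 d2); first by rewrite lt_min d10 d20.
by move=> h h0 [Kh|Kh]; rewrite lt_min => /andP[h1 h2]; [exact: Hd1|exact: Hd2].
Qed.

Lemma has_deriv_within_eq K f g t l : K t -> (forall x, K x -> f x = g x) ->
  has_deriv_within K g t l -> has_deriv_within K f t l.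
Proof.
move=> Kt fg; apply: cvg_trans; apply: near_eq_cvg; rewrite near_withinE.
by near=> h => -[_ Kh]; rewrite !fg.
Unshelve. all: by end_near. Qed.

Lemma has_deriv_withinD K f g t l1 l2 : has_deriv_within K f t l1 ->
  has_deriv_within K g t l2 -> has_deriv_within K (fun x => f x + g x) t (l1 + l2).
Proof.
move=> Hf Hg; rewrite /has_deriv_within.
have -> : (fun h => h^-1 * (f (t + h) + g (t + h) - (f t + g t))) =
  (fun h => h^-1 * (f (t + h) - f t) + h^-1 * (g (t + h) - g t)).
  by apply/funext => h; ring.
exact: cvgD.
Qed.

Lemma has_deriv_withinZ K f t l (k : R) : has_deriv_within K f t l ->
  has_deriv_within K (fun x => k * f x) t (k * l).
Proof.
move=> Hf; rewrite /has_deriv_within.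
have -> : (fun h => h^-1 * (k * f (t + h) - k * f t)) =
  (fun h => k * (h^-1 * (f (t + h) - f t))) by apply/funext => h; ring.
exact: cvgMr.
Qed.

Lemma has_deriv_within_notin K f t l : closed K -> ~ K t -> has_deriv_within K f t l.
Proof.
move=> cK Kt; apply/has_deriv_withinP => e e0.
have /nbhs_ballP [d /= d0 Hd] : nbhs t (~` K).
  by apply: open_nbhs_nbhs; split => //; exact: closed_openC.
exists d => // h _ Kh hd; exfalso; apply: (Hd (t + h)) Kh.
by rewrite /ball /= opprD addNKr normrN.
Qed.

Lemma IccE (p q : R) : Icc p q = `[p, q]%classic.
Proof. by apply/seteqP; split => x; rewrite /Icc /= in_itv. Qed.

Lemma Icc_closed (p q : R) : closed (Icc p q).
Proof. by rewrite IccE; exact: itv_closed. Qed.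

Lemma has_deriv_within_reflect K g t l c : has_deriv_within K g (c - t) l ->
  has_deriv_within [set x | K (c - x)] (fun x => g (c - x)) t (- l).
Proof.
move=> /has_deriv_withinP H; apply/has_deriv_withinP => e e0; have [d d0 Hd] := H e e0.
exists d => // h h0; rewrite /= opprD addrA => Kh hd.
have := Hd (- h); rewrite oppr_eq0 normrN => /(_ h0 Kh hd).
by rewrite invrN mulNr -normrN; congr (`|_| < _); ring.
Qed.

Lemma has_deriv_within_shift K g t l c : has_deriv_within K g (t - c) l ->
  has_deriv_within [set x | K (x - c)] (fun x => g (x - c)) t l.
Proof.
move=> /has_deriv_withinP H; apply/has_deriv_withinP => e e0; have [d d0 Hd] := H e e0.
exists d => // h h0 Kh hd; have := Hd h h0; rewrite addrAC => /(_ Kh hd).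
by congr (`|_ * (g _ - _) - _| < _); rewrite addrAC.
Qed.

Lemma Icc_reflect (p q c : R) : [set x | Icc p q (c - x)] = Icc (c - q) (c - p).
Proof.
by apply/seteqP; split => x; rewrite /Icc /= => /andP[h1 h2]; apply/andP; split; lra.
Qed.

Lemma Icc_shift (p q c : R) : [set x | Icc p q (x - c)] = Icc (p + c) (q + c).
Proof.
by apply/seteqP; split => x; rewrite /Icc /= => /andP[h1 h2]; apply/andP; split; lra.
Qed.
End derivative_within.

Section absolute_continuity.
Context {R : realType}.
Implicit Types (a b c : R) (f g : R -> R).

Lemma abs_cont_eq a b f g : (forall x, Icc a b x -> f x = g x) ->
  abs_cont a b g -> abs_cont a b f.
Proof.
move=> fg H e e0; have [d d0 Hd] := H e e0; exists d => // N x y Hxy Hdis Hs.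
have Kx i : Icc a b (x i) by case: (Hxy i) => h1 [h2 h3]; apply/andP; split; lra.
have Ky i : Icc a b (y i) by case: (Hxy i) => h1 [h2 h3]; apply/andP; split; lra.
by under eq_bigr => i _ do rewrite !fg //; exact: Hd.
Qed.

Lemma abs_contD a b f g : abs_cont a b f -> abs_cont a b g ->
  abs_cont a b (fun x => f x + g x).
Proof.
move=> Hf Hg e e0; have e20 : 0 < e / 2 by rewrite divr_gt0.
have [d1 d10 Hd1] := Hf _ e20; have [d2 d20 Hd2] := Hg _ e20.
exists (Num.min d1 d2); first by rewrite lt_min d10 d20.
move=> N x y Hxy Hdis; rewrite lt_min => /andP[s1 s2].
have := Hd1 N x y Hxy Hdis s1; have := Hd2 N x y Hxy Hdis s2 => h2 h1.
apply: (le_lt_trans (y := \sum_(i < N) (`|f (y i) - f (x i)| + `|g (y i) - g (x i)|))).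
  by apply: ler_sum => i _; rewrite opprD addrACA; exact: ler_normD.
rewrite big_split /=; lra.
Qed.

Lemma abs_contZ a b f (k : R) : abs_cont a b f -> abs_cont a b (fun x => k * f x).
Proof.
move=> H e e0; have k1 : 0 < `|k| + 1 by rewrite ltr_wpDl.
have [d d0 Hd] := H (e / (`|k| + 1)) (divr_gt0 e0 k1).
exists d => // N x y Hxy Hdis /(Hd N x y Hxy Hdis); rewrite ltr_pdivlMr // => Hs.
under eq_bigr => i _ do rewrite -mulrBr normrM.
rewrite -mulr_sumr; apply: le_lt_trans Hs.
by rewrite mulrC ler_wpM2l ?sumr_ge0 // lerDl.
Qed.

Lemma abs_cont_reflect a b g c : abs_cont a b g ->
  abs_cont (c - b) (c - a) (fun x => g (c - x)).
Proof.
move=> H e e0; have [d d0 Hd] := H e e0; exists d => // N x y Hxy Hdis Hs.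
under eq_bigr => i _ do rewrite distrC.
apply: (Hd N (fun i => c - y i) (fun i => c - x i)).
- by move=> i; case: (Hxy i) => h1 [h2 h3]; lra.
- by move=> i j /Hdis; lra.
- by rewrite (eq_bigr (fun i => y i - x i)) // => i _; ring.
Qed.

Lemma abs_cont_shift a b g c : abs_cont a b g ->
  abs_cont (a + c) (b + c) (fun x => g (x - c)).
Proof.
move=> H e e0; have [d d0 Hd] := H e e0; exists d => // N x y Hxy Hdis Hs.
apply: (Hd N (fun i => x i - c) (fun i => y i - c)).
- by move=> i; case: (Hxy i) => h1 [h2 h3]; lra.
- by move=> i j /Hdis; lra.
- by rewrite (eq_bigr (fun i => y i - x i)) // => i _; ring.
Qed.

(* Every interval [x, y] of [a, b] is cut at q into [min x q, min y q] and
   [max x q, max y q], the first lying in [a, q] and the second in [q, b]. *)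
Lemma abs_cont_cat a q b f : a <= q -> q <= b ->
  abs_cont a q f -> abs_cont q b f -> abs_cont a b f.
Proof.
move=> aq qb H1 H2 e e0; have e20 : 0 < e / 2 by rewrite divr_gt0.
have [d1 d10 Hd1] := H1 _ e20; have [d2 d20 Hd2] := H2 _ e20.
exists (Num.min d1 d2); first by rewrite lt_min d10 d20.
move=> N x y Hxy Hdis; rewrite lt_min => /andP[s1 s2].
pose xl i := Num.min (x i) q; pose yl i := Num.min (y i) q.
pose xr i := Num.max (x i) q; pose yr i := Num.max (y i) q.
have cut i : [/\ a <= xl i /\ xl i <= yl i /\ yl i <= q,
    q <= xr i /\ xr i <= yr i /\ yr i <= b, yl i - xl i + (yr i - xr i) = y i - x i &
    f (y i) - f (x i) = f (yl i) - f (xl i) + (f (yr i) - f (xr i))].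
  case: (Hxy i) => h1 [h2 h3]; rewrite /xl /yl /xr /yr !minEle !maxEle.
  by case: (leP (y i) q) => yq; case: (leP (x i) q) => xq; split; first [lra | ring].
have disj_l i j : i != j -> yl i <= xl j \/ yl j <= xl i.
  by move=> /Hdis [h|h]; [left|right]; exact: le_min2.
have disj_r i j : i != j -> yr i <= xr j \/ yr j <= xr i.
  by move=> /Hdis [h|h]; [left|right]; exact: le_max2.
have lenl i : yl i - xl i <= y i - x i.
  by case: (cut i) => _ [_ [h _]] <- _; rewrite lerDl subr_ge0.
have lenr i : yr i - xr i <= y i - x i.
  by case: (cut i) => [[_ [h _]] _ <- _]; rewrite lerDr subr_ge0.
have C1 := Hd1 N xl yl (fun i => let: And4 h _ _ _ := cut i in h) disj_l
  (le_lt_trans (ler_sum _ (fun i _ => lenl i)) s1).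
have C2 := Hd2 N xr yr (fun i => let: And4 _ h _ _ := cut i in h) disj_r
  (le_lt_trans (ler_sum _ (fun i _ => lenr i)) s2).
apply: (le_lt_trans (y := \sum_(i < N) (`|f (yl i) - f (xl i)| + `|f (yr i) - f (xr i)|))).
  by apply: ler_sum => i _; case: (cut i) => _ _ _ ->; exact: ler_normD.
rewrite big_split /=; lra.
Qed.

Lemma abs_cont_continuous a b f : abs_cont a b f -> {within Icc a b, continuous f}.
Proof.
move=> H; apply/subspace_continuousP => x Kx; apply/cvgrPdist_lt => e e0.
have [d d0 Hd] := H e e0; rewrite near_withinE; apply/nbhs_normP; exists d => //= y.
rewrite /ball_ /= => xyd Ky.
have step u v : Icc a b u -> Icc a b v -> u <= v -> v - u < d -> `|f v - f u| < e.
  move=> /andP[au _] /andP[_ vb] uv vud.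
  have := Hd 1%N (fun _ => u) (fun _ => v); rewrite !big_ord1; apply => //.
  by move=> i j; rewrite (ord1 i) (ord1 j) eqxx.
move: xyd; rewrite ltr_norml => /andP[h1 h2].
have [xy|yx] := leP x y; first by rewrite distrC; apply: step => //; lra.
by apply: step => //; lra.
Qed.
End absolute_continuity.

#[local] Instance lebesgue_ae_filter (R : realType) :
  Filter (nbhs (almost_everywhere (@lebesgue_measure R))) := ae_filter_ringOfSetsType _.

Section sobolev_solutions.
Context {R : realType} {a b : R} {n : nat}.
Implicit Types (u : R -> R) (c d : nat -> R -> R) (s : R -> R).

Lemma W2n1_intro u d : deriv_chain (Icc a b) (n.*2).-1 u d ->
  abs_cont a b (d (n.*2).-1) -> W2n1 a b n u d.
Proof. by move=> Hd Hac; split => //; split => //; exact: abs_cont_continuous. Qed.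

Lemma W2n1D {u1 u2 d1 d2} : W2n1 a b n u1 d1 -> W2n1 a b n u2 d2 ->
  W2n1 a b n (fun t => u1 t + u2 t) (fun k t => d1 k t + d2 k t).
Proof.
move=> [[E1 D1] [_ A1]] [[E2 D2] [_ A2]]; apply: W2n1_intro; last exact: abs_contD.
split=> [t Kt|k kn t Kt]; first by rewrite E1 // E2.
exact: has_deriv_withinD (D1 k kn t Kt) (D2 k kn t Kt).
Qed.

Lemma W2n1Z {u d} (k : R) : W2n1 a b n u d ->
  W2n1 a b n (fun t => k * u t) (fun j t => k * d j t).
Proof.
move=> [[E D] [_ A]]; apply: W2n1_intro; last exact: abs_contZ.
split=> [t Kt|j jn t Kt]; first by rewrite E.
exact: has_deriv_withinZ (D j jn t Kt).
Qed.

Lemma eq_solves c d s1 s2 : (forall t, s1 t = s2 t) ->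
  solves a b n c d s1 -> solves a b n c d s2.
Proof. by move=> E; apply: filterS => t H Kt; rewrite -E; exact: H. Qed.

Lemma solvesD {c d1 d2 s1 s2} : solves a b n c d1 s1 -> solves a b n c d2 s2 ->
  solves a b n c (fun k t => d1 k t + d2 k t) (fun t => s1 t + s2 t).
Proof.
apply: filterS2 => t S1 S2 Kt; have [v1 [D1 E1]] := S1 Kt; have [v2 [D2 E2]] := S2 Kt.
exists (v1 + v2); split; first exact: is_deriveD.
by rewrite -E1 -E2 addrACA -big_split; congr (_ + _); apply: eq_bigr => i _; rewrite mulrDr.
Qed.

Lemma solvesZ {c d s} (k : R) : solves a b n c d s ->
  solves a b n c (fun j t => k * d j t) (fun t => k * s t).
Proof.
apply: filterS => t S Kt; have [v [D E]] := S Kt.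
exists (k * v); split; first exact: is_deriveZ.
by rewrite -E mulrDr mulr_sumr; congr (_ + _); apply: eq_bigr => i _; rewrite mulrCA.
Qed.
End sobolev_solutions.

Section lebesgue_ae.
Context {R : realType}.
Local Notation mu := (@lebesgue_measure R).

Lemma measurable_fun_addr (c : R) : measurable_fun [set: R] (fun x : R => x + c).
Proof.
apply: measurable_realfun.continuous_measurable_fun => x.
by apply: cvgD; [exact: cvg_id | exact: cvg_cst].
Qed.

Lemma lebesgue_measure_shift (c : R) (A : set R) : measurable A ->
  mu ((fun x => x + c) @^-1` A) = mu A.
Proof.
move=> mA; have := @lebesgue_measure_unique R
  (pushforward mu ((fun x : R => x + c) : _ -> measurableTypeR R)).
move=> H; symmetry; apply: H => //; first exact: measurable_fun_addr.
move=> mf _ [[p q]] _ <-.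
have E : (fun x : R => x + c) @^-1` `]p, q]%classic = `]p - c, q - c]%classic.
  by apply/seteqP; split => x; rewrite /= !in_itv /= => /andP[h1 h2]; apply/andP; split; lra.
change (mu `]p, q]%classic = mu ((fun x : R => x + c) @^-1` `]p, q]%classic)).
rewrite E !lebesgue_measure_itv /= !lte_fin ltrD2r.
by case: ifP => // _; rewrite -!EFinD; congr EFin; ring.
Qed.

Lemma ae_shift (c : R) (P : R -> Prop) :
  {ae mu, forall t, P t} -> {ae mu, forall t, P (t + c)}.
Proof.
case=> A [mA A0 PA]; exists ((fun x => x + c) @^-1` A); split.
- by rewrite -[X in measurable X]setTI; exact: measurable_fun_addr.
- by rewrite lebesgue_measure_shift.
- by move=> t /= Pt; exact: PA.
Qed.

Lemma measurable_fun_oppr : measurable_fun [set: R] (fun x : R => - x).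
Proof. by apply: measurable_realfun.continuous_measurable_fun => x; apply: cvgN; exact: cvg_id. Qed.

Lemma ae_opp (P : R -> Prop) : {ae mu, forall t, P t} -> {ae mu, forall t, P (- t)}.
Proof.
case=> A [mA A0 PA]; exists ((fun x => - x) @^-1` A); split.
- by rewrite -[X in measurable X]setTI; exact: measurable_fun_oppr.
- by rewrite -[LHS]/(pushforward mu (-%R : _ -> measurableTypeR R) A) lebesgue_measureN.
- by move=> t /= Pt; exact: PA.
Qed.

Lemma ae_reflect (c : R) (P : R -> Prop) :
  {ae mu, forall t, P t} -> {ae mu, forall t, P (c - t)}.
Proof. by move=> /(ae_shift c) /ae_opp; apply: filterS => t; rewrite addrC. Qed.

Lemma ae_neq (c : R) : {ae mu, forall t, t != c}.
Proof.
exists [set c]; split; [exact: measurable_set1 | exact: lebesgue_measure_set1 |].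
by move=> t /= /negP; rewrite negbK => /eqP ->.
Qed.
End lebesgue_ae.

Section equation_transport.
Context {R : realType} {n : nat}.
Hypothesis n_gt0 : (0 < n)%N.
Implicit Types (p q c : R) (a w : nat -> R -> R) (s : R -> R).

Lemma oppr_signr_pred_double : - (-1) ^+ (n.*2).-1 = 1 :> R.
Proof. by rewrite -mulN1r -exprS prednK ?double_gt0 // -signr_odd odd_double. Qed.

Lemma eq_solves_in p q a1 a2 w1 w2 s1 s2 :
  (forall k x, p < x < q -> a1 k x = a2 k x) ->
  (forall k x, p < x < q -> w1 k x = w2 k x) ->
  (forall x, p < x < q -> s1 x = s2 x) ->
  solves p q n a1 w1 s1 -> solves p q n a2 w2 s2.
Proof.
move=> Ea Ew Es S; near=> t => Kt.
have tp : t != p by near: t; exact: ae_neq.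
have tq : t != q by near: t; exact: ae_neq.
have [v [Dv Ev]] : exists v, is_derive t 1 (w1 (n.*2).-1) v /\
    v + \sum_(k < n.*2) a1 k t * w1 k t = s1 t.
  by move: Kt; near: t; exact: S.
have pqt : p < t < q.
  by move: Kt; rewrite /Icc /= !le_eqVlt eq_sym (negbTE tp) (negbTE tq) /= => /andP[-> ->].
exists v; split.
  apply: near_eq_is_derive Dv; near=> x; apply: Ew; near: x.
  have : t \in `]p, q[ by rewrite in_itv.
  by move=> /near_in_itvoo; apply: filterS => x; rewrite in_itv.
rewrite -Es // -Ev; congr (_ + _); apply: eq_bigr => k _; rewrite Ea ?Ew //.
Unshelve. all: by end_near. Qed.

Lemma is_derive_reflect (g : R -> R) c t v : is_derive (c - t) 1 g v ->
  is_derive t 1 (fun x => g (c - x)) (- v).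
Proof.
move=> Dg; have Dc : is_derive t 1 (fun x : R => c - x) (-1).
  by rewrite -sub0r; apply: is_deriveB.
by have := @is_derive1_comp R g (fun x => c - x) t v (-1) Dg Dc; rewrite mulrN1.
Qed.

Lemma is_derive_shift (g : R -> R) c t v : is_derive (t - c) 1 g v ->
  is_derive t 1 (fun x => g (x - c)) v.
Proof.
move=> Dg; have Dc : is_derive t 1 (fun x : R => x - c) 1.
  by have := @is_deriveB _ _ _ id (fun=> c) t 1 1 0 _ _; rewrite subr0; apply.
by have := @is_derive1_comp R g (fun x => x - c) t v 1 Dg Dc; rewrite mulr1.
Qed.

Lemma solves_reflect {p q} c {a w s} : solves p q n a w s ->
  solves (c - q) (c - p) n (fun k x => (-1) ^+ k * a k (c - x))
    (fun k x => (-1) ^+ k * w k (c - x)) (fun x => s (c - x)).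
Proof.
move=> /(ae_reflect c); apply: filterS => t St; rewrite -Icc_reflect => /St [v [Dv Ev]].
exists ((-1) ^+ (n.*2).-1 * - v); split; first exact/is_deriveZ/is_derive_reflect.
rewrite mulrN -mulNr oppr_signr_pred_double mul1r -Ev; congr (_ + _).
by apply: eq_bigr => k _; rewrite mulrACA -exprMn mulrNN mulr1 expr1n mul1r.
Qed.

Lemma solves_shift {p q} c {a w s} : solves p q n a w s ->
  solves (p + c) (q + c) n (fun k x => a k (x - c)) (fun k x => w k (x - c)) (fun x => s (x - c)).
Proof.
move=> /(ae_shift (- c)); apply: filterS => t St; rewrite -Icc_shift => /St [v [Dv Ev]].
by exists v; split; first exact: is_derive_shift.
Qed.

Lemma solves_cat {p q r a w s} : p <= q -> q <= r ->
  solves p q n a w s -> solves q r n a w s -> solves p r n a w s.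
Proof.
move=> pq qr; apply: filterS2 => t S1 S2 /andP[pt tr].
by have [tq|qt] := leP t q; [apply: S1 | apply: S2]; apply/andP; split; lra.
Qed.
End equation_transport.

Section sobolev_transport.
Context {R : realType} {n : nat}.
Hypothesis n_gt0 : (0 < n)%N.
Implicit Types (p q r c : R) (u : R -> R) (w d : nat -> R -> R).

Lemma W2n1_reflect {p q} c {u w} : W2n1 p q n u w ->
  W2n1 (c - q) (c - p) n (fun x => u (c - x)) (fun k x => (-1) ^+ k * w k (c - x)).
Proof.
move=> [[E D] [_ A]]; apply: W2n1_intro; last exact/abs_contZ/abs_cont_reflect.
split=> [t|k kn t]; rewrite -Icc_reflect => Kt; first by rewrite mul1r E.
rewrite exprS mulN1r mulNr -mulrN.
exact/has_deriv_withinZ/has_deriv_within_reflect/D.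
Qed.

Lemma W2n1_shift {p q} c {u w} : W2n1 p q n u w ->
  W2n1 (p + c) (q + c) n (fun x => u (x - c)) (fun k x => w k (x - c)).
Proof.
move=> [[E D] [_ A]]; apply: W2n1_intro; last exact: abs_cont_shift.
split=> [t|k kn t]; rewrite -Icc_shift => Kt; first by rewrite E.
exact/has_deriv_within_shift/D.
Qed.

Lemma W2n1_eq p q u w d : (forall k x, (k < n.*2)%N -> Icc p q x -> d k x = w k x) ->
  W2n1 p q n u w -> W2n1 p q n (d 0%N) d.
Proof.
move=> Edw [[E D] [_ A]]; have top : ((n.*2).-1 < n.*2)%N by rewrite prednK ?double_gt0.
apply: W2n1_intro; last exact: abs_cont_eq (fun x => Edw _ x top) A.
split=> // k kn t Kt; have kn' : (k < n.*2)%N by apply: ltn_trans kn top.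
rewrite (Edw k.+1 t) //; first exact: has_deriv_within_eq Kt (fun x => Edw k x kn') (D k kn t Kt).
exact: leq_ltn_trans kn top.
Qed.

Lemma W2n1_cat {p q r u d} : p <= q -> q <= r ->
  W2n1 p q n u d -> W2n1 q r n u d -> W2n1 p r n u d.
Proof.
move=> pq qr [[E1 D1] [_ A1]] [[E2 D2] [_ A2]].
apply: W2n1_intro; last exact: abs_cont_cat A1 A2.
have split_pr t : Icc p r t -> Icc p q t \/ Icc q r t.
  by move=> /andP[pt tr]; have [tq|qt] := leP t q; [left|right]; apply/andP; split; lra.
have piece s1 s2 (D : forall k, (k < (n.*2).-1)%N -> forall t, Icc s1 s2 t ->
    has_deriv_within (Icc s1 s2) (d k) t (d k.+1 t)) k t : (k < (n.*2).-1)%N ->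
    has_deriv_within (Icc s1 s2) (d k) t (d k.+1 t).
  by move=> kn; have [Kt|Kt] := pselect (Icc s1 s2 t);
    [exact: D | exact: has_deriv_within_notin (Icc_closed s1 s2) Kt].
split=> [t /split_pr [Kt|Kt]|k kn t Kt]; [exact: E1 | exact: E2 |].
have -> : Icc p r = Icc p q `|` Icc q r.
  by apply/seteqP; split => x; [move/split_pr | case=> /andP[h1 h2]; apply/andP; split; lra].
by apply: has_deriv_within_setU; exact: piece.
Qed.
End sobolev_transport.

Section four_quarters.
Context {R : realType}.
Variables (T : R) (n : nat).
Hypothesis n_gt0 : (0 < n)%N.
Implicit Types (a w : nat -> R -> R) (k : nat) (x : R).

(* The sign (-1)^k is that of the k-th derivative of x |-> w (c - x).  The third
   branch is open at 3T so that refl (2T) (refl T a) = glue a a a a exactly. *)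
Definition glue w1 w2 w3 w4 : nat -> R -> R := fun k x =>
  if x <= T then w1 k x
  else if x <= 2 * T then (-1) ^+ k * w2 k (2 * T - x)
  else if x < 3 * T then w3 k (x - 2 * T)
  else (-1) ^+ k * w4 k (4 * T - x).

Definition glue_compatible w1 w2 w3 w4 k : Prop :=
  [/\ w1 k T = (-1) ^+ k * w2 k T, (-1) ^+ k * w2 k 0 = w3 k 0,
      w3 k T = (-1) ^+ k * w4 k T & w1 k 0 = (-1) ^+ k * w4 k 0].

Lemma refl2_glue a : 0 < T -> refl (2 * T) (refl T a) = glue a a a a.
Proof.
move=> T0; apply/funext => k; apply/funext => x; rewrite /refl /glue.
case: (leP x T) => xT; first by have -> : x <= 2 * T by lra.
case: (leP x (2 * T)) => x2T //.
have -> : (2 * (2 * T) - x <= T) = ~~ (x < 3 * T) by rewrite -leNgt; apply/idP/idP; lra.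
case: ltP => x3T /=; last by congr (_ * a k _); ring.
by rewrite mulrA -exprMn mulrNN mulr1 expr1n mul1r; congr (a k _); ring.
Qed.

Section glue_values.
Variables w1 w2 w3 w4 : nat -> R -> R.
Local Notation g := (glue w1 w2 w3 w4).

Lemma glue_first k x : x <= T -> g k x = w1 k x.
Proof. by rewrite /glue => ->. Qed.

Lemma glue_second k x : T < x <= 2 * T -> g k x = (-1) ^+ k * w2 k (2 * T - x).
Proof. by rewrite /glue => /andP[Tx ->]; rewrite leNgt Tx. Qed.

Lemma glue_third k x : 0 < T -> 2 * T < x < 3 * T -> g k x = w3 k (x - 2 * T).
Proof.
move=> T0 /andP[h1 h2]; have Tx : T < x by lra.
by rewrite /glue !leNgt Tx h1 h2.
Qed.

Lemma glue_fourth k x : 0 < T -> 3 * T <= x -> g k x = (-1) ^+ k * w4 k (4 * T - x).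
Proof.
move=> T0 h; have Tx : T < x by lra.
have T2x : 2 * T < x by lra.
by rewrite /glue !leNgt Tx T2x ltNge h.
Qed.

Lemma glue_second_closed k x : 0 < T -> glue_compatible w1 w2 w3 w4 k ->
  Icc T (2 * T) x -> g k x = (-1) ^+ k * w2 k (2 * T - x).
Proof.
move=> T0 [C1 _ _ _] /andP[h1 h2]; have [->|Tx] := eqVneq x T.
  by rewrite glue_first // C1; congr (_ * w2 k _); ring.
by apply: glue_second; rewrite h2 lt_neqAle eq_sym Tx h1.
Qed.

Lemma glue_third_closed k x : 0 < T -> glue_compatible w1 w2 w3 w4 k ->
  Icc (2 * T) (3 * T) x -> g k x = w3 k (x - 2 * T).
Proof.
move=> T0 [_ C2 C3 _] /andP[h1 h2].
have [->|x2] := eqVneq x (2 * T).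
  by rewrite glue_second ?subrr ?C2 //; apply/andP; split; lra.
have [->|x3] := eqVneq x (3 * T).
  rewrite glue_fourth // (_ : 3 * T - 2 * T = T) ?C3; last by ring.
  by congr (_ * w4 k _); ring.
by apply: glue_third => //; rewrite !lt_neqAle h1 h2 eq_sym x2 x3.
Qed.

Lemma glue_periodic k : 0 < T -> glue_compatible w1 w2 w3 w4 k -> g k 0 = g k (4 * T).
Proof.
move=> T0 [_ _ _ C4]; rewrite glue_first ?glue_fourth ?subrr //; lra.
Qed.
End glue_values.

Lemma glue_W2n1 w1 w2 w3 w4 u1 u2 u3 u4 : 0 < T ->
  W2n1 0 T n u1 w1 -> W2n1 0 T n u2 w2 -> W2n1 0 T n u3 w3 -> W2n1 0 T n u4 w4 ->
  (forall k, (k < n.*2)%N -> glue_compatible w1 w2 w3 w4 k) ->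
  W2n1 0 (4 * T) n (glue w1 w2 w3 w4 0%N) (glue w1 w2 w3 w4).
Proof.
move=> T0 W1 W2 W3 W4 C.
have Q1 : W2n1 0 T n (glue w1 w2 w3 w4 0%N) (glue w1 w2 w3 w4).
  by apply: W2n1_eq W1 => // k x _ /andP[_ xT]; exact: glue_first.
have Q2 : W2n1 T (2 * T) n (glue w1 w2 w3 w4 0%N) (glue w1 w2 w3 w4).
  have := W2n1_reflect (2 * T) W2; rewrite subr0 (_ : 2 * T - T = T); last by ring.
  by apply: W2n1_eq => // k x kn; exact: glue_second_closed (C k kn).
have Q3 : W2n1 (2 * T) (3 * T) n (glue w1 w2 w3 w4 0%N) (glue w1 w2 w3 w4).
  have := W2n1_shift (2 * T) W3; rewrite add0r (_ : T + 2 * T = 3 * T); last by ring.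
  by apply: W2n1_eq => // k x kn; exact: glue_third_closed (C k kn).
have Q4 : W2n1 (3 * T) (4 * T) n (glue w1 w2 w3 w4 0%N) (glue w1 w2 w3 w4).
  have := W2n1_reflect (4 * T) W4; rewrite subr0 (_ : 4 * T - T = 3 * T); last by ring.
  by apply: W2n1_eq => // k x _ /andP[h _]; exact: glue_fourth.
apply: (W2n1_cat _ _ (W2n1_cat _ _ (W2n1_cat _ _ Q1 Q2) Q3) Q4); lra.
Qed.

Lemma glue_solves a w1 w2 w3 w4 s : 0 < T ->
  solves 0 T n a w1 s -> solves 0 T n a w2 (fun=> 0) ->
  solves 0 T n a w3 (fun=> 0) -> solves 0 T n a w4 (fun=> 0) ->
  solves 0 (4 * T) n (glue a a a a) (glue w1 w2 w3 w4) (s \_ (Icc 0 T)).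
Proof.
move=> T0 S1 S2 S3 S4.
have out x : T < x -> (s \_ (Icc 0 T)) x = 0.
  by move=> Tx; rewrite patchE memNset // => /andP[_ xT]; lra.
have Q1 : solves 0 T n (glue a a a a) (glue w1 w2 w3 w4) (s \_ (Icc 0 T)).
  apply: eq_solves_in S1 => [k x /andP[_ /ltW]|k x /andP[_ /ltW]|x /andP[x0 xT]].
  - by move/glue_first.
  - by move/glue_first.
  by rewrite patchE mem_set //; apply/andP; split; exact: ltW.
have Q2 : solves T (2 * T) n (glue a a a a) (glue w1 w2 w3 w4) (s \_ (Icc 0 T)).
  have := solves_reflect n_gt0 (2 * T) S2; rewrite subr0 (_ : 2 * T - T = T); last by ring.
  apply: eq_solves_in => [k x /andP[h1 /ltW h2]|k x /andP[h1 /ltW h2]|x /andP[h _]].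
  - by rewrite glue_second // h1 h2.
  - by rewrite glue_second // h1 h2.
  by rewrite out.
have Q3 : solves (2 * T) (3 * T) n (glue a a a a) (glue w1 w2 w3 w4) (s \_ (Icc 0 T)).
  have := solves_shift (2 * T) S3; rewrite add0r (_ : T + 2 * T = 3 * T); last by ring.
  apply: eq_solves_in => [k x h|k x h|x /andP[h _]]; try by rewrite glue_third.
  by rewrite out //; lra.
have Q4 : solves (3 * T) (4 * T) n (glue a a a a) (glue w1 w2 w3 w4) (s \_ (Icc 0 T)).
  have := solves_reflect n_gt0 (4 * T) S4; rewrite subr0 (_ : 4 * T - T = 3 * T); last by ring.
  apply: eq_solves_in => [k x /andP[/ltW h _]|k x /andP[/ltW h _]|x /andP[h _]].
  - by rewrite glue_fourth.
  - by rewrite glue_fourth.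
  by rewrite out //; lra.
apply: (solves_cat _ _ (solves_cat _ _ (solves_cat _ _ Q1 Q2) Q3) Q4); lra.
Qed.
End four_quarters.

Section integration.
Context {R : realType}.
Local Notation mu := (@lebesgue_measure R).
Implicit Types (p q : R) (f g h : R -> R).

Lemma Icc_measurable p q : measurable (Icc p q : set (measurableTypeR R)).
Proof. by rewrite IccE; exact: measurable_itv. Qed.

Lemma continuous_Icc_integrable {p q f} : {within Icc p q, continuous f} ->
  mu.-integrable (Icc p q) (EFin \o f).
Proof.
by move=> cf; apply: continuous_compact_integrable => //; rewrite IccE; exact: segment_compact.
Qed.

Lemma within_continuousM (A : set R) f g : {within A, continuous f} ->
  {within A, continuous g} -> {within A, continuous (fun x => f x * g x)}.
Proof.
move=> /subspace_continuousP cf /subspace_continuousP cg; apply/subspace_continuousP => x Ax.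
exact: cvgM (cf x Ax) (cg x Ax).
Qed.

Lemma continuous_section {p q} {G : R -> R -> R} {t} :
  {within [set z : R * R | Icc p q z.1 /\ Icc p q z.2], continuous (fun z => G z.1 z.2)} ->
  Icc p q t -> {within Icc p q, continuous (G t)}.
Proof.
move=> /subspace_continuousP cG Kt; apply/subspace_continuousP => s Ks.
have pair : (fun s' : R => (t, s')) @ nbhs s --> ((t, s) : R * R).
  exact: (cvg_pair (cvg_cst t) cvg_id).
apply: cvg_trans (cG (t, s) (conj Kt Ks)) => P /=; rewrite !nbhs_filterE /= => HP.
by have := pair _ HP; rewrite nbhs_filterE /= /within; apply: filterS => s' /= HS Ks'; exact: HS.
Qed.

Lemma integrable_patch {p q p' q' f} : Icc p q `<=` Icc p' q' ->
  mu.-integrable (Icc p q) (EFin \o f) -> mu.-integrable (Icc p' q') (EFin \o (f \_ (Icc p q))).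
Proof.
move=> sub If; rewrite -restrict_EFin.
apply/(integrable_restrict _ (Icc_measurable p q) (Icc_measurable p' q')).
by rewrite setIidr.
Qed.

Lemma Rintegral_patch {p q p' q'} f : Icc p q `<=` Icc p' q' ->
  \int[mu]_(x in Icc p' q') (f \_ (Icc p q)) x = \int[mu]_(x in Icc p q) f x.
Proof.
move=> sub; rewrite -[in RHS](setIidr sub) Rintegral_mkcondr; apply: eq_Rintegral => x _.
by rewrite !patchE; case: ifP.
Qed.

Lemma continuous_Rintegral_sqr_eq0 {p q h} : p < q -> {within Icc p q, continuous h} ->
  \int[mu]_(x in Icc p q) (h x * h x) = 0 -> forall s, Icc p q s -> h s = 0.
Proof.
move=> pq ch I0 s Ks; apply/eqP/negPn/negP => hs.
pose e := `|h s| / 2; have e0 : 0 < e by rewrite divr_gt0 // normr_gt0.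
have [d d0 near_s] : exists2 d : R, 0 < d & forall y, Icc p q y -> `|s - y| < d -> e <= `|h y|.
  move: ((subspace_continuousP _ _).1 ch s Ks) => /cvgrPdist_lt /(_ e e0).
  rewrite near_withinE => /nbhs_normP [d d0 Hd]; exists d => // y Ky sy.
  have := Hd y sy Ky; have := ler_normD (h s - h y) (h y); rewrite subrK /e /=.
  lra.
pose al := Num.max p (s - d / 2); pose be := Num.min q (s + d / 2).
have ab : al < be.
  by case/andP: Ks => ps sq; rewrite lt_min !gt_max -!andbA; apply/and4P; split; lra.
have alb y : Icc al be y -> [/\ Icc p q y, s - d / 2 <= y & y <= s + d / 2].
  by rewrite /Icc /= ge_max le_min => /andP[/andP[? ?] /andP[? ?]]; split=> //; apply/andP.
have sub : Icc al be `<=` Icc p q by move=> y /alb[].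
have close y : Icc al be y -> `|s - y| < d.
  by case/alb => _ h1 h2; rewrite ltr_norml; apply/andP; split; lra.
have bound y : Icc al be y -> e ^+ 2 <= h y * h y.
  move=> Ky; have := near_s y (sub y Ky) (close y Ky).
  rewrite -[h y * h y]expr2 -(real_normK (num_real (h y))) !expr2 => ey.
  by apply: ler_pM => //; exact: ltW.
have : e ^+ 2 * (be - al) <= 0.
  have -> : e ^+ 2 * (be - al) = \int[mu]_(x in Icc al be) e ^+ 2.
    have M : mu (Icc al be) = (be - al)%:E.
      by rewrite IccE lebesgue_measure_itv /= lte_fin ab -EFinD.
    by rewrite (Rintegral_cst _ (Icc_measurable al be)) -[be - al]/(fine (be - al)%:E) -M.
  rewrite -I0 -(Rintegral_patch _ sub); apply: le_Rintegral.
  - exact: Icc_measurable.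
  - apply: integrable_patch sub _; apply: continuous_Icc_integrable.
    by apply: continuous_subspaceT; exact: cst_continuous.
  - exact/continuous_Icc_integrable/within_continuousM.
  by move=> x _; rewrite patchE; case: ifP => [/set_mem/bound //|_]; rewrite -expr2 sqr_ge0.
have : 0 < e ^+ 2 * (be - al) by rewrite mulr_gt0 ?exprn_gt0 // subr_gt0.
lra.
Qed.

Lemma Rintegral_sub_mean4 p q f g1 g2 g3 g4 :
  {within Icc p q, continuous f} -> {within Icc p q, continuous g1} ->
  {within Icc p q, continuous g2} -> {within Icc p q, continuous g3} ->
  {within Icc p q, continuous g4} ->
  \int[mu]_(x in Icc p q) (f x - (g1 x + g2 x + g3 x + g4 x) / 4) =
  \int[mu]_(x in Icc p q) f x - (\int[mu]_(x in Icc p q) g1 x + \int[mu]_(x in Icc p q) g2 x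
    + \int[mu]_(x in Icc p q) g3 x + \int[mu]_(x in Icc p q) g4 x) / 4.
Proof.
move=> cf c1 c2 c3 c4; have mI := Icc_measurable p q.
have c12 : {within Icc p q, continuous (fun x => g1 x + g2 x)} by exact: within_continuousD.
have c123 : {within Icc p q, continuous (fun x => g1 x + g2 x + g3 x)} by exact: within_continuousD.
have c1234 : {within Icc p q, continuous (fun x => g1 x + g2 x + g3 x + g4 x)}.
  exact: within_continuousD.
rewrite RintegralB ?RintegralZr ?RintegralD //; apply: continuous_Icc_integrable => //.
apply: within_continuousM c1234 _; apply: continuous_subspaceT; exact: cst_continuous.
Qed.
End integration.

Definition signed_mean {R : realType} (dN dD dM1 dM2 : nat -> R -> R) (e1 e2 e3 e4 : R) :
  nat -> R -> R := fun k t =>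
  4^-1 * (e1 * dN k t + e2 * dD k t + e3 * dM1 k t + e4 * dM2 k t).

Section signed_means.
Context {R : realType} {n : nat} {dN dD dM1 dM2 : nat -> R -> R}.
Local Notation sm := (signed_mean dN dD dM1 dM2).

Lemma W2n1_signed_mean {p q : R} {uN uD uM1 uM2 : R -> R} e1 e2 e3 e4 :
  W2n1 p q n uN dN -> W2n1 p q n uD dD -> W2n1 p q n uM1 dM1 -> W2n1 p q n uM2 dM2 ->
  W2n1 p q n (fun t => 4^-1 * (e1 * uN t + e2 * uD t + e3 * uM1 t + e4 * uM2 t))
    (sm e1 e2 e3 e4).
Proof.
move=> WN WD WM1 WM2.
exact: W2n1Z 4^-1 (W2n1D (W2n1D (W2n1D (W2n1Z e1 WN) (W2n1Z e2 WD)) (W2n1Z e3 WM1)) (W2n1Z e4 WM2)).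
Qed.

Lemma solves_signed_mean {p q : R} {a : nat -> R -> R} {s : R -> R} e1 e2 e3 e4 :
  solves p q n a dN s -> solves p q n a dD s -> solves p q n a dM1 s -> solves p q n a dM2 s ->
  solves p q n a (sm e1 e2 e3 e4) (fun t => 4^-1 * (e1 + e2 + e3 + e4) * s t).
Proof.
move=> SN SD SM1 SM2; apply: eq_solves (solvesZ 4^-1 (solvesD (solvesD (solvesD
  (solvesZ e1 SN) (solvesZ e2 SD)) (solvesZ e3 SM1)) (solvesZ e4 SM2))) => t; ring.
Qed.

Lemma signed_mean_compatible (T : R) :
  BC_N 0 T n dN -> BC_D 0 T n dD -> BC_M1 0 T n dM1 -> BC_M2 0 T n dM2 ->
  forall k, (k < n.*2)%N ->
  glue_compatible T (sm 1 1 1 1) (sm 1 (-1) (-1) 1) (sm 1 1 (-1) (-1)) (sm 1 (-1) 1 (-1)) k.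
Proof.
move=> BN BD BM1 BM2 k kn; have jn : (k./2 < n)%N by rewrite ltn_half_double.
have [N0 NT] := BN _ jn; have [D0 DT] := BD _ jn.
have [M10 M1T] := BM1 _ jn; have [M20 M2T] := BM2 _ jn.
rewrite /glue_compatible /signed_mean -signr_odd.
have := odd_double_half k; case: (odd k) => /= Ek; rewrite -Ek.
- by rewrite N0 NT M10 M2T; split; ring.
- by rewrite DT M1T D0 M20; split; ring.
Qed.
End signed_means.

Lemma Rintegral_green_periodic_mean {R : realType} {n : nat} {T : R} {a : nat -> R -> R}
    {GN GD GM1 GM2 GP : R -> R -> R} {sigma : R -> R} {t : R} :
  (0 < n)%N -> 0 < T ->
  nonresonant 0 (4 * T) n (refl (2 * T) (refl T a)) (@BC_P R) ->
  is_green 0 T n a (@BC_N R) GN -> is_green 0 T n a (@BC_D R) GD ->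
  is_green 0 T n a (@BC_M1 R) GM1 -> is_green 0 T n a (@BC_M2 R) GM2 ->
  is_green 0 (4 * T) n (refl (2 * T) (refl T a)) (@BC_P R) GP ->
  (@lebesgue_measure R).-integrable (Icc 0 T) (EFin \o sigma) -> Icc 0 T t ->
  \int[lebesgue_measure]_(s in Icc 0 T) (GP t s * sigma s) =
  (\int[lebesgue_measure]_(s in Icc 0 T) (GN t s * sigma s)
   + \int[lebesgue_measure]_(s in Icc 0 T) (GD t s * sigma s)
   + \int[lebesgue_measure]_(s in Icc 0 T) (GM1 t s * sigma s)
   + \int[lebesgue_measure]_(s in Icc 0 T) (GM2 t s * sigma s)) / 4.
Proof.
move=> n0 T0 NRP [_ gN] [_ gD] [_ gM1] [_ gM2] [_ gP] Is Kt.
have sub : Icc 0 T `<=` Icc 0 (4 * T) by move=> x /andP[x0 xT]; apply/andP; split; lra.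
have [dN [WN [BN SN]]] := gN _ Is; have [dD [WD [BD SD]]] := gD _ Is.
have [dM1 [WM1 [BM1 SM1]]] := gM1 _ Is; have [dM2 [WM2 [BM2 SM2]]] := gM2 _ Is.
have [dP [WP [BP SP]]] := gP _ (integrable_patch sub Is).
pose sm := signed_mean dN dD dM1 dM2.
pose w := glue T (sm 1 1 1 1) (sm 1 (-1) (-1) 1) (sm 1 1 (-1) (-1)) (sm 1 (-1) 1 (-1)).
have C := signed_mean_compatible T BN BD BM1 BM2.
have Ww : W2n1 0 (4 * T) n (w 0%N) w.
  by apply: glue_W2n1 => //; apply: W2n1_signed_mean; eassumption.
have Sw : solves 0 (4 * T) n (refl (2 * T) (refl T a)) w (sigma \_ (Icc 0 T)).
  rewrite refl2_glue //; apply: glue_solves => //;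
    by apply: eq_solves (solves_signed_mean _ _ _ _ SN SD SM1 SM2) => x; field; lra.
have Bdiff : BC_P 0 (4 * T) n (fun k x => dP k x + -1 * w k x).
  by move=> k kn; rewrite /= BP // /w glue_periodic //; exact: C.
have Sdiff : solves 0 (4 * T) n (refl (2 * T) (refl T a))
    (fun k x => dP k x + -1 * w k x) (fun=> 0).
  by apply: eq_solves (solvesD SP (solvesZ (-1) Sw)) => x; ring.
have := NRP _ _ (W2n1D WP (W2n1Z (-1) Ww)) Bdiff Sdiff t (sub _ Kt).
rewrite /= /w glue_first /sm /signed_mean; last by case/andP: Kt.
rewrite WN.1.1 // WD.1.1 // WM1.1.1 // WM2.1.1 //.
have -> : \int[lebesgue_measure]_(s in Icc 0 (4 * T)) (GP t s * (sigma \_ (Icc 0 T)) s) =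
    \int[lebesgue_measure]_(s in Icc 0 T) (GP t s * sigma s).
  rewrite -(Rintegral_patch _ sub); apply: eq_Rintegral => x _.
  by rewrite !patchE; case: ifP; rewrite ?mulr0.
lra.
Qed.

Theorem mainTheorem5 (R : realType) (n : nat) (T alpha : R)
    (a : nat -> R -> R) (GN GD GM1 GM2 GP : R -> R -> R) :
  (0 < n)%N -> 0 < T -> 1 <= alpha ->
  (forall k, (k < n.*2)%N -> Lalpha 0 T alpha (a k)) ->
  nonresonant 0 T n a (@BC_N R) ->
  nonresonant 0 T n a (@BC_D R) ->
  nonresonant 0 T n a (@BC_M1 R) ->
  nonresonant 0 T n a (@BC_M2 R) ->
  nonresonant 0 (2 * T) n (refl T a) (@BC_N R) ->
  nonresonant 0 (2 * T) n (refl T a) (@BC_D R) ->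
  nonresonant 0 (4 * T) n (refl (2 * T) (refl T a)) (@BC_P R) ->
  is_green 0 T n a (@BC_N R) GN ->
  is_green 0 T n a (@BC_D R) GD ->
  is_green 0 T n a (@BC_M1 R) GM1 ->
  is_green 0 T n a (@BC_M2 R) GM2 ->
  is_green 0 (4 * T) n (refl (2 * T) (refl T a)) (@BC_P R) GP ->
  forall t s, Icc 0 T t -> Icc 0 T s ->
    GP t s = (GN t s + GD t s + GM1 t s + GM2 t s) / 4.
Proof.
move=> n0 T0 _ _ _ _ _ _ _ _ NRP gN gD gM1 gM2 gP t s Kt Ks.
have cN := continuous_section gN.1 Kt; have cD := continuous_section gD.1 Kt.
have cM1 := continuous_section gM1.1 Kt; have cM2 := continuous_section gM2.1 Kt.
have sub : Icc 0 T `<=` Icc 0 (4 * T) by move=> x /andP[? ?]; apply/andP; split; lra.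
have cP := continuous_subspaceW sub (continuous_section gP.1 (sub _ Kt)).
pose h x := GP t x - (GN t x + GD t x + GM1 t x + GM2 t x) / 4.
have ch : {within Icc 0 T, continuous h}.
  apply: within_continuousB => //; apply: within_continuousM; last first.
    by apply: continuous_subspaceT; exact: cst_continuous.
  by do 3 apply: within_continuousD => //.
apply/eqP; rewrite -subr_eq0 -/(h s); apply/eqP.
apply: (continuous_Rintegral_sqr_eq0 T0 ch _ s Ks).
transitivity (\int[lebesgue_measure]_(x in Icc 0 T) (GP t x * h x
    - (GN t x * h x + GD t x * h x + GM1 t x * h x + GM2 t x * h x) / 4)).
  by apply: eq_Rintegral => x _; rewrite /h; ring.
rewrite Rintegral_sub_mean4; try exact: within_continuousM.
have Ih := continuous_Icc_integrable ch.
by rewrite (Rintegral_green_periodic_mean n0 T0 NRP gN gD gM1 gM2 gP Ih Kt) subrr.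
Qed.
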